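(* Let $\mathbf C$ and $\mathbf D$ be categories given by presentations (generators and relations) which are cliques. Let $O_{\mathbf C}$ be a nonempty set of objects of $\mathbf C$ and $G_{\mathbf C}$ a set of generators of $\mathbf C$ between objects of $O_{\mathbf C}$, and similarly $O_{\mathbf D}$, $G_{\mathbf D}$ for $\mathbf D$. Let $\alpha:O_{\mathbf C}\to O_{\mathbf D}$ and $\beta:G_{\mathbf C}\to G_{\mathbf D}$ be compatible bijections (if $g:a\to b$ then $\beta(g):\alpha(a)\to\alpha(b)$). Suppose the subcategory of $\mathbf D$ with objects $O_{\mathbf D}$ generated by $G_{\mathbf D}$ is a full subcategory of $\mathbf D$. Then the category $G(\alpha,\beta)$ is a clique.
   Context: A clique (abstract clique) is a category with a nonempty set of objects and exactly one morphism between each ordered pair of objects (equivalently a nonempty connected thin groupoid). $G(\alpha,\beta)$ is the category presented as follows: its objects are the pushout of the object sets of $\mathbf C$ and $\mathbf D$ along the bijection $\alpha$ (objects of $O_{\mathbf C}$ identified with their images); its generators are the pushout of the generators of $\mathbf C$ and of $\mathbf D$ along $\beta$; its relations are all relations of $\mathbf C$ and all relations of $\mathbf D$. *)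

From Stdlib Require Import List Relations ClassicalEpsilon.
Import ListNotations.
Set Implicit Arguments.

Record presentation := Presentation {
  Ob : Type;
  Gen : Type;
  gsrc : Gen -> Ob;
  gtgt : Gen -> Ob;
  Rel : Type;
  rsrc : Rel -> Ob;
  rtgt : Rel -> Ob;
  rlhs : Rel -> list Gen;
  rrhs : Rel -> list Gen
}.

(* [valid P a l b]: the list of generators [l] (in diagrammatic order) is a
   composable path from [a] to [b]; the empty list is the identity at a. *)
Fixpoint valid (P : presentation) (a : Ob P) (l : list (Gen P)) (b : Ob P) : Prop :=
  match l with
  | [] => a = b
  | g :: l' => gsrc P g = a /\ valid P (gtgt P g) l' b
  end.

Definition wf_presentation (P : presentation) : Prop :=
  forall r : Rel P, valid P (rsrc P r) (rlhs P r) (rtgt P r)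
                 /\ valid P (rsrc P r) (rrhs P r) (rtgt P r).

Inductive step (P : presentation) (a b : Ob P) : list (Gen P) -> list (Gen P) -> Prop :=
| step_intro : forall (r : Rel P) (p q : list (Gen P)),
    valid P a p (rsrc P r) -> valid P (rtgt P r) q b ->
    valid P (rsrc P r) (rlhs P r) (rtgt P r) ->
    valid P (rsrc P r) (rrhs P r) (rtgt P r) ->
    step P a b (p ++ rlhs P r ++ q) (p ++ rrhs P r ++ q).

Definition congruent (P : presentation) (a b : Ob P) : relation (list (Gen P)) :=
  clos_refl_sym_trans _ (step P a b).

(* Morphisms a -> b of the presented category are the valid paths a -> b
   modulo [congruent P a b].  A clique: nonempty object set and exactly one
   morphism between each ordered pair of objects. *)
Definition is_clique (P : presentation) : Prop :=
  inhabited (Ob P) /\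
  forall a b : Ob P,
    (exists l, valid P a l b) /\
    (forall l1 l2, valid P a l1 b -> valid P a l2 b -> congruent P a b l1 l2).

(* The subcategory with objects OD generated by GD is full in D: every morphism
   between objects of OD is (the class of) a composite of generators in GD. *)
Definition generated_sub_full (D : presentation) (OD : Ob D -> Prop)
    (GD : Gen D -> Prop) : Prop :=
  forall a b : Ob D, OD a -> OD b -> forall l, valid D a l b ->
    exists l', Forall GD l' /\ valid D a l' b /\ congruent D a b l l'.

Section Glue.
Variables (C D : presentation) (OC : Ob C -> Prop) (GC : Gen C -> Prop)
          (alpha : Ob C -> Ob D) (beta : Gen C -> Gen D).

(* Pushout of the object sets along the bijection alpha : OC -> OD, with
   canonical representatives: objects of C outside OC, plus all objects of D
   (an x in OC is identified with alpha x). *)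
Definition GOb : Type := ({x : Ob C | ~ OC x} + Ob D)%type.
Definition iOb (x : Ob C) : GOb :=
  match excluded_middle_informative (OC x) with
  | left _ => inr (alpha x)
  | right h => inl (exist _ x h)
  end.

(* Pushout of the generator sets along beta : GC -> GD, likewise. *)
Definition GGen : Type := ({g : Gen C | ~ GC g} + Gen D)%type.
Definition iGen (g : Gen C) : GGen :=
  match excluded_middle_informative (GC g) with
  | left _ => inr (beta g)
  | right h => inl (exist _ g h)
  end.

Definition GGsrc (g : GGen) : GOb :=
  match g with inl g' => iOb (gsrc C (proj1_sig g')) | inr h => inr (gsrc D h) end.
Definition GGtgt (g : GGen) : GOb :=
  match g with inl g' => iOb (gtgt C (proj1_sig g')) | inr h => inr (gtgt D h) end.

Definition GRel : Type := (Rel C + Rel D)%type.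
Definition GRsrc (r : GRel) : GOb :=
  match r with inl r' => iOb (rsrc C r') | inr r' => inr (rsrc D r') end.
Definition GRtgt (r : GRel) : GOb :=
  match r with inl r' => iOb (rtgt C r') | inr r' => inr (rtgt D r') end.
Definition GRlhs (r : GRel) : list GGen :=
  match r with inl r' => map iGen (rlhs C r') | inr r' => map inr (rlhs D r') end.
Definition GRrhs (r : GRel) : list GGen :=
  match r with inl r' => map iGen (rrhs C r') | inr r' => map inr (rrhs D r') end.

Definition Gpres : presentation :=
  Presentation GGsrc GGtgt GRsrc GRtgt GRlhs GRrhs.
End Glue.

From Stdlib Require Import List Relations ClassicalEpsilon ProofIrrelevance.
Import ListNotations.

(* Fix x0 in O_C and let base = alpha x0, an object of
   G(alpha,beta).  For every object o of G we choose a path [out o] : o -> base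
   and a path [inn o] : base -> o, lying in the image of C (if o comes from
   C \ O_C) or of D (otherwise), and show that every path l : a -> b of G is
   congruent to the normal form [out a ++ inn b]; so G is a clique.  By
   induction on l this reduces to  g :: out (tgt g) ~ out (src g)  for a single
   generator g.  For g in D this is cliqueness of D.  For g in C it rests on
   the key fact that, inside G, a path of D between objects of O_D is
   congruent to any parallel path of C: by fullness the D-path may be taken in
   G_D, it then lifts along beta to C, and C is a clique. *)

Section Paths.
Context {P : presentation}.

Lemma valid_app (l1 l2 : list (Gen P)) {a m b : Ob P} :
  valid P a l1 m -> valid P m l2 b -> valid P a (l1 ++ l2) b.
Proof.
  revert a; induction l1 as [|g l1 IH]; simpl; intros a H1 H2.
  - subst; exact H2.
  - destruct H1 as [Hs Hv]; split; eauto.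
Qed.

Lemma cong_app_r {a m b : Ob P} (q : list (Gen P)) {l l' : list (Gen P)} :
  congruent P a m l l' -> valid P m q b -> congruent P a b (l ++ q) (l' ++ q).
Proof.
  intros H Hq; induction H as [l l' [r p p' Hp Hp' Hl Hr]| | |].
  - rewrite <- !app_assoc; apply rst_step, step_intro; auto.
    eapply valid_app; eauto.
  - apply rst_refl.
  - apply rst_sym; auto.
  - eapply rst_trans; eauto.
Qed.

Lemma cong_app_l {a m b : Ob P} (p : list (Gen P)) {l l' : list (Gen P)} :
  valid P a p m -> congruent P m b l l' -> congruent P a b (p ++ l) (p ++ l').
Proof.
  intros Hp H; induction H as [l l' [r p0 q Hp0 Hq Hl Hr]| | |].
  - rewrite (app_assoc p p0), (app_assoc p p0); apply rst_step, step_intro; auto.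
    eapply valid_app; eauto.
  - apply rst_refl.
  - apply rst_sym; auto.
  - eapply rst_trans; eauto.
Qed.

Lemma clique_congruent (HP : is_clique P) {a b : Ob P} {l1 l2 : list (Gen P)} :
  valid P a l1 b -> valid P a l2 b -> congruent P a b l1 l2.
Proof. exact (proj2 (proj2 HP a b) l1 l2). Qed.

Definition clique_path (HP : is_clique P) (a b : Ob P) : list (Gen P) :=
  proj1_sig (constructive_indefinite_description _ (proj1 (proj2 HP a b))).

Lemma clique_path_valid (HP : is_clique P) (a b : Ob P) :
  valid P a (clique_path HP a b) b.
Proof. unfold clique_path; apply proj2_sig. Qed.

End Paths.

Section Morphism.
Variables (P Q : presentation) (fo : Ob P -> Ob Q) (fg : Gen P -> Gen Q)
          (fr : Rel P -> Rel Q).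
Hypothesis fg_src : forall g, gsrc Q (fg g) = fo (gsrc P g).
Hypothesis fg_tgt : forall g, gtgt Q (fg g) = fo (gtgt P g).
Hypothesis fr_src : forall r, rsrc Q (fr r) = fo (rsrc P r).
Hypothesis fr_tgt : forall r, rtgt Q (fr r) = fo (rtgt P r).
Hypothesis fr_lhs : forall r, rlhs Q (fr r) = map fg (rlhs P r).
Hypothesis fr_rhs : forall r, rrhs Q (fr r) = map fg (rrhs P r).

Lemma map_valid (l : list (Gen P)) (a b : Ob P) :
  valid P a l b -> valid Q (fo a) (map fg l) (fo b).
Proof.
  revert a; induction l as [|g l IH]; simpl; intros a H.
  - subst; reflexivity.
  - destruct H as [Hs Hv]; split.
    + rewrite fg_src; congruence.
    + rewrite fg_tgt; auto.
Qed.

Lemma map_congruent (a b : Ob P) (l1 l2 : list (Gen P)) :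
  congruent P a b l1 l2 -> congruent Q (fo a) (fo b) (map fg l1) (map fg l2).
Proof.
  intro H; induction H as [l1 l2 [r p q Hp Hq Hl Hr]| | |].
  - rewrite !map_app, <- fr_lhs, <- fr_rhs; apply rst_step, step_intro.
    + rewrite fr_src; apply map_valid; auto.
    + rewrite fr_tgt; apply map_valid; auto.
    + rewrite fr_src, fr_tgt, fr_lhs; apply map_valid; auto.
    + rewrite fr_src, fr_tgt, fr_rhs; apply map_valid; auto.
  - apply rst_refl.
  - apply rst_sym; auto.
  - eapply rst_trans; eauto.
Qed.

End Morphism.

Section Gluing.
Variables (C D : presentation) (OC : Ob C -> Prop) (GC : Gen C -> Prop)
          (GD : Gen D -> Prop) (alpha : Ob C -> Ob D) (beta : Gen C -> Gen D).

Local Notation G := (Gpres C D OC GC alpha beta).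
Local Notation iO := (iOb C D OC alpha).
Local Notation iG := (iGen C D GC beta).
Local Notation GOb := (GOb C D OC).

Hypothesis GC_in : forall g, GC g -> OC (gsrc C g) /\ OC (gtgt C g).
Hypothesis compat : forall g, GC g ->
  gsrc D (beta g) = alpha (gsrc C g) /\ gtgt D (beta g) = alpha (gtgt C g).

Lemma iOb_in {x : Ob C} : OC x -> iO x = inr (alpha x).
Proof.
  intro Hx; unfold iOb; destruct excluded_middle_informative; [reflexivity | contradiction].
Qed.

Lemma iOb_out {x : Ob C} (n : ~ OC x) : iO x = inl (exist _ x n).
Proof.
  unfold iOb; destruct excluded_middle_informative as [|n']; [contradiction|].
  rewrite (proof_irrelevance _ n' n); reflexivity.
Qed.

Lemma iGen_in {g : Gen C} : GC g -> iG g = inr (beta g).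
Proof.
  intro Hg; unfold iGen; destruct excluded_middle_informative; [reflexivity | contradiction].
Qed.

Lemma iGen_out {g : Gen C} (n : ~ GC g) : iG g = inl (exist _ g n).
Proof.
  unfold iGen; destruct excluded_middle_informative as [|n']; [contradiction|].
  rewrite (proof_irrelevance _ n' n); reflexivity.
Qed.

Lemma iGen_src (g : Gen C) : gsrc G (iG g) = iO (gsrc C g).
Proof.
  destruct (excluded_middle_informative (GC g)) as [Hg|n].
  - rewrite iGen_in by exact Hg; simpl.
    rewrite (proj1 (compat g Hg)), iOb_in by exact (proj1 (GC_in g Hg)); reflexivity.
  - rewrite (iGen_out n); reflexivity.
Qed.

Lemma iGen_tgt (g : Gen C) : gtgt G (iG g) = iO (gtgt C g).
Proof.
  destruct (excluded_middle_informative (GC g)) as [Hg|n].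
  - rewrite iGen_in by exact Hg; simpl.
    rewrite (proj2 (compat g Hg)), iOb_in by exact (proj2 (GC_in g Hg)); reflexivity.
  - rewrite (iGen_out n); reflexivity.
Qed.

Lemma embedC_valid {l : list (Gen C)} {a b : Ob C} :
  valid C a l b -> valid G (iO a) (map iG l) (iO b).
Proof. apply map_valid; [exact iGen_src | exact iGen_tgt]. Qed.

Lemma embedC_congruent {a b : Ob C} {l1 l2 : list (Gen C)} :
  congruent C a b l1 l2 -> congruent G (iO a) (iO b) (map iG l1) (map iG l2).
Proof.
  apply (map_congruent C G iO iG inl iGen_src iGen_tgt); reflexivity.
Qed.

Lemma embedD_valid {l : list (Gen D)} {a b : Ob D} :
  valid D a l b -> valid G (inr a) (map inr l) (inr b).
Proof. apply map_valid; reflexivity. Qed.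

Lemma embedD_congruent {a b : Ob D} {l1 l2 : list (Gen D)} :
  congruent D a b l1 l2 -> congruent G (inr a) (inr b) (map inr l1) (map inr l2).
Proof. apply (map_congruent D G inr inr inr); reflexivity. Qed.

(* Injectivity of alpha and surjectivity of beta let G_D-paths lift to C. *)
Hypothesis alpha_inj : forall x y, OC x -> OC y -> alpha x = alpha y -> x = y.
Hypothesis beta_surj : forall h, GD h -> exists g, GC g /\ beta g = h.

Lemma lift_generated_path {l : list (Gen D)} {a b : Ob C} :
  Forall GD l -> OC a -> OC b -> valid D (alpha a) l (alpha b) ->
  exists lc, valid C a lc b /\ map iG lc = map inr l.
Proof.
  revert a; induction l as [|h l IH]; intros a HF Ha Hb Hv.
  - exists []; split; [apply alpha_inj; auto | reflexivity].
  - inversion HF as [|? ? Hh HF']; subst.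
    destruct (beta_surj h Hh) as [g [Hg <-]].
    destruct Hv as [Hsrc Hv]; destruct (compat g Hg) as [Hgs Hgt].
    rewrite Hgt in Hv.
    destruct (IH (gtgt C g) HF' (proj2 (GC_in g Hg)) Hb Hv) as [lc [Hlc Hmap]].
    exists (g :: lc); split.
    + split; [apply alpha_inj; auto; [apply GC_in; auto | congruence] | exact Hlc].
    + simpl; rewrite iGen_in, Hmap by exact Hg; reflexivity.
Qed.

Variable OD : Ob D -> Prop.
Hypothesis cliqueC : is_clique C.
Hypothesis alpha_maps : forall x, OC x -> OD (alpha x).
Hypothesis full : generated_sub_full D OD GD.

(* By fullness the D-path is congruent to one in G_D,
   which lifts to C, where all parallel paths are congruent. *)
Lemma D_path_congruent_C_path {a b : Ob C} {l : list (Gen D)} {c : list (Gen C)} :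
  OC a -> OC b -> valid D (alpha a) l (alpha b) -> valid C a c b ->
  congruent G (inr (alpha a)) (inr (alpha b)) (map inr l) (map iG c).
Proof.
  intros Ha Hb Hl Hc.
  destruct (full _ _ (alpha_maps a Ha) (alpha_maps b Hb) _ Hl) as [l' [HF [Hl' Hll']]].
  destruct (lift_generated_path HF Ha Hb Hl') as [lc [Hlc Hmap]].
  eapply rst_trans; [exact (embedD_congruent Hll') |].
  rewrite <- Hmap, <- (iOb_in Ha), <- (iOb_in Hb).
  apply embedC_congruent, (clique_congruent cliqueC Hlc Hc).
Qed.

Hypothesis cliqueD : is_clique D.
Variable x0 : Ob C.
Hypothesis Hx0 : OC x0.

Local Notation base := (@inr {x : Ob C | ~ OC x} (Ob D) (alpha x0)).

Definition out (o : GOb) : list (Gen G) :=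
  match o with
  | inl x => map iG (clique_path cliqueC (proj1_sig x) x0)
  | inr d => map inr (clique_path cliqueD d (alpha x0))
  end.

Definition inn (o : GOb) : list (Gen G) :=
  match o with
  | inl x => map iG (clique_path cliqueC x0 (proj1_sig x))
  | inr d => map inr (clique_path cliqueD (alpha x0) d)
  end.

Lemma out_valid (o : GOb) : valid G o (out o) base.
Proof.
  destruct o as [[x n]|d]; simpl.
  - rewrite <- (iOb_out n), <- (iOb_in Hx0); apply embedC_valid, clique_path_valid.
  - apply embedD_valid, clique_path_valid.
Qed.

Lemma inn_valid (o : GOb) : valid G base (inn o) o.
Proof.
  destruct o as [[x n]|d]; simpl.
  - rewrite <- (iOb_out n), <- (iOb_in Hx0); apply embedC_valid, clique_path_valid.
  - apply embedD_valid, clique_path_valid.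
Qed.

Lemma out_congruent_C_path {s : Ob C} {c : list (Gen C)} :
  valid C s c x0 -> congruent G (iO s) base (out (iO s)) (map iG c).
Proof.
  intro Hc; destruct (excluded_middle_informative (OC s)) as [Hs|n].
  - rewrite (iOb_in Hs); apply D_path_congruent_C_path; auto.
    apply clique_path_valid.
  - rewrite (iOb_out n); simpl; rewrite <- (iOb_out n), <- (iOb_in Hx0).
    apply embedC_congruent, (clique_congruent cliqueC); auto.
    apply clique_path_valid.
Qed.

Lemma out_inn_identity (o : GOb) : congruent G o o [] (out o ++ inn o).
Proof.
  destruct o as [[x n]|d]; simpl; rewrite <- map_app.
  - rewrite <- (iOb_out n); apply (@embedC_congruent x x []), (clique_congruent cliqueC).
    + reflexivity.
    + eapply valid_app; apply clique_path_valid.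
  - apply (@embedD_congruent d d []), (clique_congruent cliqueD).
    + reflexivity.
    + eapply valid_app; apply clique_path_valid.
Qed.

Lemma generator_out (g : Gen G) :
  congruent G (gsrc G g) base (g :: out (gtgt G g)) (out (gsrc G g)).
Proof.
  destruct g as [[g n]|h]; simpl.
  - set (c := clique_path cliqueC (gtgt C g) x0).
    assert (Hc : valid C (gtgt C g) c x0) by apply clique_path_valid.
    eapply rst_trans.
    + exact (cong_app_l (P := G) (m := iO (gtgt C g)) [inl (exist _ g n)]
               (conj eq_refl eq_refl) (out_congruent_C_path Hc)).
    + rewrite <- (iGen_out n); apply rst_sym, (out_congruent_C_path (c := g :: c)).
      split; [reflexivity | exact Hc].
  - apply (@embedD_congruent _ _ (h :: _)), (clique_congruent cliqueD);
      [split; [reflexivity|] |]; apply clique_path_valid.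
Qed.

Lemma normal_form {l : list (Gen G)} {a b : GOb} :
  valid G a l b -> congruent G a b l (out a ++ inn b).
Proof.
  revert a; induction l as [|g l IH]; intros a Hv.
  - simpl in Hv; subst b; apply out_inn_identity.
  - destruct Hv as [<- Hv].
    eapply rst_trans; [exact (cong_app_l [g] (conj eq_refl eq_refl) (IH _ Hv)) |].
    exact (cong_app_r (inn b) (generator_out g) (inn_valid b)).
Qed.

(* Parallel paths share a normal form, so G(alpha,beta) is a clique. *)
Theorem glued_is_clique : is_clique G.
Proof.
  split; [exact (inhabits base) |].
  intros a b; split.
  - exists (out a ++ inn b); eapply valid_app; [apply out_valid | apply inn_valid].
  - intros l1 l2 H1 H2; eapply rst_trans;
      [apply normal_form, H1 | apply rst_sym, normal_form, H2].
Qed.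

End Gluing.

(* The theorem. *)
Theorem mainTheorem19
  (C D : presentation)
  (wfC : wf_presentation C) (wfD : wf_presentation D)
  (cliqueC : is_clique C) (cliqueD : is_clique D)
  (OC : Ob C -> Prop) (GC : Gen C -> Prop)
  (OD : Ob D -> Prop) (GD : Gen D -> Prop)
  (OC_ne : exists x, OC x)
  (GC_in : forall g, GC g -> OC (gsrc C g) /\ OC (gtgt C g))
  (GD_in : forall h, GD h -> OD (gsrc D h) /\ OD (gtgt D h))
  (alpha : Ob C -> Ob D) (beta : Gen C -> Gen D)
  (alpha_maps : forall x, OC x -> OD (alpha x))
  (alpha_inj : forall x y, OC x -> OC y -> alpha x = alpha y -> x = y)
  (alpha_surj : forall y, OD y -> exists x, OC x /\ alpha x = y)
  (beta_maps : forall g, GC g -> GD (beta g))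
  (beta_inj : forall g g', GC g -> GC g' -> beta g = beta g' -> g = g')
  (beta_surj : forall h, GD h -> exists g, GC g /\ beta g = h)
  (compat : forall g, GC g ->
     gsrc D (beta g) = alpha (gsrc C g) /\ gtgt D (beta g) = alpha (gtgt C g))
  (full : generated_sub_full D OD GD) :
  is_clique (Gpres C D OC GC alpha beta).
Proof.
  destruct OC_ne as [x0 Hx0].
  exact (glued_is_clique C D OC GC GD alpha beta GC_in compat alpha_inj beta_surj
           OD cliqueC alpha_maps full cliqueD x0 Hx0).
Qed.
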